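(* Let $1<p\le2$, $\varepsilon\in(0,1]$, $\widehat\Omega\subset\mathbb{H}^n$ open and $v\in C^2(\widehat\Omega)$ with $\nabla_\varepsilon v\ne0$ in $\widehat\Omega$. If $v$ is $p$-harmonic in $\widehat\Omega$ with respect to $|\cdot|_\varepsilon$, then in $\widehat\Omega$ $$2|\nabla_\varepsilon v|_\varepsilon^2\,|\overline D^2_\varepsilon v|^2\ge\frac12\Big(1+\frac{(p-1)^2}{2n}\Big)\Big\langle\frac{\nabla_\varepsilon v}{|\nabla_\varepsilon v|_\varepsilon},\nabla_\varepsilon|\nabla_\varepsilon v|_\varepsilon^2\Big\rangle_\varepsilon^2 .$$
   Context: $\mathbb{H}^n=\mathbb{R}^{2n+1}$ with $X_i=\partial_{x_i}-\frac{y_i}2\partial_t$, $Y_i=\partial_{y_i}+\frac{x_i}2\partial_t$, $T_\varepsilon=\varepsilon\partial_t$; orthonormal frame $\{E_1,\dots,E_{2n+1}\}=\{X_1,\dots,X_n,Y_1,\dots,Y_n,T_\varepsilon\}$ of the Riemannian metric $\langle\cdot,\cdot\rangle_\varepsilon$; $\nabla_\varepsilon v=\sum_j(E_jv)E_j$; rough Hessian $\overline D^2_\varepsilon v=(E_jE_iv)_{i,j}$ with $|\overline D^2_\varepsilon v|^2=\sum_{i,j}(E_jE_iv)^2$. $p$-harmonic: $\mathrm{div}_\varepsilon(|\nabla_\varepsilon v|_\varepsilon^{p-2}\nabla_\varepsilon v)=0$ with $\mathrm{div}_\varepsilon(\sum_j\varphi_jE_j)=\sum_jE_j\varphi_j$.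 *)

From HB Require Import structures.
From mathcomp Require Import all_boot all_order all_algebra.
From mathcomp Require Import all_classical all_reals all_analysis.
Set Implicit Arguments. Unset Strict Implicit. Unset Printing Implicit Defensive.
Import Order.TTheory GRing.Theory Num.Theory.
Import numFieldNormedType.Exports.
Local Open Scope classical_set_scope.
Local Open Scope ring_scope.

(* H^n = R^(2n+1); a point is a row vector q with coordinates
   q_k = x_(k+1) for k < n, q_(n+k) = y_(k+1) for k < n, q_(2n) = t. *)
Definition Hpt (R : realType) (n : nat) := 'rV[R]_(n + n).+1.

Definition coord {R : realType} {n : nat} (q : Hpt R n) (k : nat) : R :=
  q ord0 (inord k).

Definition edir (R : realType) (n : nat) (k : nat) : Hpt R n :=
  delta_mx ord0 (inord k).

Definition pd {R : realType} {n : nat} (k : nat) (f : Hpt R n -> R) : Hpt R n -> R :=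
  fun q => 'D_(edir R n k) f q.

(* The orthonormal frame E_1..E_(2n+1) = X_1..X_n, Y_1..Y_n, T_eps,
   indexed here by j = 0 .. 2n. *)
Definition Efr {R : realType} {n : nat} (eps : R) (j : nat) (f : Hpt R n -> R)
  : Hpt R n -> R :=
  fun q =>
    if (j < n)%N then pd j f q - coord q (j + n) / 2 * pd (n + n) f q
    else if (j < n + n)%N then pd j f q + coord q (j - n) / 2 * pd (n + n) f q
    else eps * pd (n + n) f q.

Definition grad_eps {R : realType} {n : nat} (eps : R) (v : Hpt R n -> R) (q : Hpt R n)
  : 'rV[R]_(n + n).+1 := \row_(j < (n + n).+1) Efr eps j v q.

Definition gnorm2 {R : realType} {n : nat} (eps : R) (v : Hpt R n -> R) : Hpt R n -> R :=
  fun q => \sum_(j < (n + n).+1) (Efr eps j v q) ^+ 2.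

Definition gnorm {R : realType} {n : nat} (eps : R) (v : Hpt R n -> R) : Hpt R n -> R :=
  fun q => Num.sqrt (gnorm2 eps v q).

Definition hess2 {R : realType} {n : nat} (eps : R) (v : Hpt R n -> R) (q : Hpt R n) : R :=
  \sum_(i < (n + n).+1) \sum_(j < (n + n).+1) (Efr eps j (Efr eps i v) q) ^+ 2.

Definition C2on {R : realType} {n : nat} (Om : set (Hpt R n)) (v : Hpt R n -> R) : Prop :=
  {within Om, continuous v} /\
  (forall i, (i < (n + n).+1)%N ->
     (forall q, Om q -> derivable v q (edir R n i)) /\
     {within Om, continuous (pd i v)} /\
     (forall j, (j < (n + n).+1)%N ->
        (forall q, Om q -> derivable (pd i v) q (edir R n j)) /\
        {within Om, continuous (pd j (pd i v))})).

(* p-harmonic (classical sense, meaningful since v is C^2 and the gradient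
   does not vanish): div_eps(|grad v|^(p-2) grad v) = 0 on Omega, where
   div_eps(sum_j phi_j E_j) = sum_j E_j phi_j. *)
Definition p_harmonic {R : realType} {n : nat} (eps p : R) (Om : set (Hpt R n))
  (v : Hpt R n -> R) : Prop :=
  forall q, Om q ->
    \sum_(j < (n + n).+1)
       Efr eps j (fun z => (gnorm eps v z) `^ (p - 2) * Efr eps j v z) q = 0.

Definition dirder_gnorm2 {R : realType} {n : nat} (eps : R) (v : Hpt R n -> R)
  (q : Hpt R n) : R :=
  \sum_(j < (n + n).+1) (Efr eps j v q / gnorm eps v q) * Efr eps j (gnorm2 eps v) q.

From Pilot Require Import Defs.
From HB Require Import structures.
From mathcomp Require Import all_boot all_order all_algebra.
From mathcomp Require Import all_classical all_reals all_analysis.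
From mathcomp Require Import ring lra.
Set Implicit Arguments.
Unset Strict Implicit.
Unset Printing Implicit Defensive.

Import Order.TTheory GRing.Theory Num.Theory.
Import numFieldNormedType.Exports.
Local Open Scope classical_set_scope.
Local Open Scope ring_scope.

(* At a point write [a] for the frame gradient of [v], [A = |a|^2], and
   [M i j = E_j E_i v].  Expanding the divergence, p-harmonicity reads
   [A tr M + (p - 2) <M a, a> = 0], i.e. [A tr M - <M a, a> = -(p - 1) <M a, a>].
   Cauchy-Schwarz for the Frobenius product of the parts of [A^2 M] and of
   [A Id] orthogonal to [a a^T] bounds the square of the left-hand side by
   [2n (A^2 |M|^2 - <M a, a>^2)], and [<a / |a|, grad A> = 2 <M a, a> / |a|]
   turns this into the claimed estimate. *)

Section FiniteSums.
Variable R : realDomainType.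

Lemma sum_mul_sqr_le (I : finType) (z w : I -> R) :
  (\sum_i z i * w i) ^+ 2 <= (\sum_i z i ^+ 2) * (\sum_i w i ^+ 2).
Proof.
(* Lagrange's identity *)
have expand i j : (z i * w j - z j * w i) ^+ 2 =
    z i ^+ 2 * w j ^+ 2 + w i ^+ 2 * z j ^+ 2 - 2 * (z i * w i) * (z j * w j).
  by ring.
have : 0 <= \sum_i \sum_j (z i * w j - z j * w i) ^+ 2.
  by apply: sumr_ge0 => i _; apply: sumr_ge0 => j _; exact: sqr_ge0.
under eq_bigr => i _ do rewrite (eq_bigr _ (fun j _ => expand i j)) sumrB big_split
  /= -!mulr_sumr.
rewrite sumrB big_split /= -!mulr_suml -mulr_sumr.
by nra.
Qed.

Lemma sum_pair_delta (I : finType) (g : I -> I -> R) :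
  \sum_(u : I * I) g u.1 u.2 * (u.1 == u.2)%:R = \sum_i g i i.
Proof.
rewrite -(pair_bigA _ (fun i j => g i j * (i == j)%:R)); apply: eq_bigr => i _.
rewrite (bigD1 i) //= eqxx mulr1 big1 ?addr0 // => j /negbTE.
by rewrite eq_sym => ->; rewrite mulr0.
Qed.

Lemma sum_pair_mul (I : finType) (f g : I -> R) :
  \sum_(u : I * I) f u.1 * g u.2 = (\sum_i f i) * (\sum_i g i).
Proof. by rewrite big_distrlr pair_bigA. Qed.

(* Cauchy-Schwarz for [z = A^2 M - T a a^T] and [w = A Id - a a^T], both
   Frobenius-orthogonal to [a a^T]. *)
Lemma trace_quadform_sqr_le (I : finType) (a : I -> R) (M : I -> I -> R) :
  0 < \sum_i a i ^+ 2 ->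
  ((\sum_i a i ^+ 2) * (\sum_i M i i) - \sum_i \sum_j M i j * (a i * a j)) ^+ 2 <=
  (#|I|%:R - 1) * ((\sum_i a i ^+ 2) ^+ 2 * (\sum_i \sum_j M i j ^+ 2)
                   - (\sum_i \sum_j M i j * (a i * a j)) ^+ 2).
Proof.
rewrite !pair_bigA /=.
set A := \sum_i a i ^+ 2; set T := \sum_u M u.1 u.2 * _.
set F := \sum_u M u.1 u.2 ^+ 2 => A_gt0.
pose d (u : I * I) : R := (u.1 == u.2)%:R.
pose z u := A ^+ 2 * M u.1 u.2 - T * (a u.1 * a u.2).
pose w u := A * d u - a u.1 * a u.2.
have sum_aa : \sum_(u : I * I) a u.1 ^+ 2 * a u.2 ^+ 2 = A ^+ 2.
  by rewrite (sum_pair_mul (fun i => a i ^+ 2) (fun i => a i ^+ 2)) expr2.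
have sum_ad : \sum_(u : I * I) a u.1 * a u.2 * d u = A.
  rewrite (sum_pair_delta (fun i j => a i * a j)).
  by apply: eq_bigr => i _; rewrite expr2.
have zw u : z u * w u =
    A ^+ 3 * (M u.1 u.2 * d u) - A ^+ 2 * (M u.1 u.2 * (a u.1 * a u.2))
    - T * A * (a u.1 * a u.2 * d u) + T * (a u.1 ^+ 2 * a u.2 ^+ 2).
  by rewrite /z /w; ring.
have ww u : w u ^+ 2 = A ^+ 2 * d u - 2 * A * (a u.1 * a u.2 * d u)
    + a u.1 ^+ 2 * a u.2 ^+ 2.
  by rewrite /w /d; case: (_ == _) => /=; ring.
have zz u : z u ^+ 2 =
    A ^+ 4 * M u.1 u.2 ^+ 2 - 2 * A ^+ 2 * T * (M u.1 u.2 * (a u.1 * a u.2))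
    + T ^+ 2 * (a u.1 ^+ 2 * a u.2 ^+ 2).
  by rewrite /z; ring.
have := sum_mul_sqr_le z w.
rewrite (eq_bigr _ (fun u _ => zw u)) (eq_bigr _ (fun u _ => ww u))
  (eq_bigr _ (fun u _ => zz u)) !big_split /= !sumrN -!mulr_sumr.
rewrite sum_aa sum_ad -/T -/F.
rewrite [\sum_u M u.1 u.2 * d u](sum_pair_delta M).
have -> : \sum_(u : I * I) d u = #|I|%:R.
  under eq_bigr do rewrite -[d _]mul1r.
  by rewrite (sum_pair_delta (fun _ _ => 1)) sumr_const.
have A4 : 0 < A ^+ 4 by rewrite exprn_gt0.
rewrite (_ : (A ^+ 3 * _ - _ - _ + _) ^+ 2 = A ^+ 4 * (A * \sum_i M i i - T) ^+ 2);
  last by ring.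
rewrite (_ : (A ^+ 4 * F - _ + _) * _ =
    A ^+ 4 * ((#|I|%:R - 1) * (A ^+ 2 * F - T ^+ 2))); last by ring.
by rewrite ler_pM2l.
Qed.

End FiniteSums.

Section DirectionalChainRule.
Variables (R : realFieldType) (V : normedModType R).
Implicit Types (f : V -> R) (g : R -> R) (x e : V).

Lemma derive_line f x e : 'D_e f x = 'D_1 (fun t : R => f (t *: e + x)) 0.
Proof.
rewrite /derive; set g1 := fun h => h^-1 *: _; set g2 := fun h => h^-1 *: _.
suff -> : g1 = g2 by [].
by rewrite funeqE /g1 /g2 => t /=; rewrite addr0 scale0r add0r [_%:A]mulr1.
Qed.

Lemma derivable_comp g f x e :
  derivable f x e -> derivable g (f x) 1 -> derivable (g \o f) x e.
Proof.
move=> /derivable1P df dg.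
apply/derivable1P/derivable1_diffP.
apply: (@differentiable_comp _ _ _ _ (fun t : R => f (t *: e + x)) g).
  exact/derivable1_diffP.
by apply/derivable1_diffP; rewrite /= scale0r add0r.
Qed.

Lemma derive_comp g f x e :
  derivable f x e -> derivable g (f x) 1 ->
  'D_e (g \o f) x = derive1 g (f x) * 'D_e f x.
Proof.
move=> /derivable1P df dg.
have dg0 : derivable g ((fun t : R => f (t *: e + x)) 0) 1.
  by rewrite /= scale0r add0r.
rewrite !derive_line -derive1E.
rewrite (derive1_comp df dg0) !derive1E /=.
by rewrite scale0r add0r.
Qed.

End DirectionalChainRule.

Section Frame.
Variables (R : realType) (n : nat) (eps : R).
Local Notation V := (Hpt R n).
Implicit Types (f g : V -> R) (q x e : V).

Definition coord_derivable f q :=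
  forall k : 'I_(n + n).+1, derivable f q (edir R n k).

Lemma derivable_coord (k : nat) x e : derivable (fun z : V => Defs.coord z k) x e.
Proof. exact/diff_derivable/differentiable_coord. Qed.

Lemma Efr_first_order (j : nat) : exists al be : V -> R,
  [/\ forall x e, derivable al x e, forall x e, derivable be x e &
      forall f q, Efr eps j f q = al q * pd j f q + be q * pd (n + n) f q].
Proof.
rewrite /Efr; case: ltnP => [_|_].
  exists (fun=> 1), (fun z => - (Defs.coord z (j + n) / 2)); split => [x e|x e|f q].
  - exact: derivable_cst.
  - by apply/derivableN/derivableM; [exact: derivable_coord|exact: derivable_cst].
  - by rewrite mul1r mulNr.
case: ltnP => [_|_].
  exists (fun=> 1), (fun z => Defs.coord z (j - n) / 2); split => [x e|x e|f q].
  - exact: derivable_cst.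
  - by apply: derivableM; [exact: derivable_coord|exact: derivable_cst].
  - by rewrite mul1r.
exists (fun=> 0), (fun=> eps); split => [x e|x e|f q].
- exact: derivable_cst.
- exact: derivable_cst.
- by rewrite mul0r add0r.
Qed.

Lemma derivable_Efr (j : nat) f q e :
  derivable (pd j f) q e -> derivable (pd (n + n) f) q e ->
  derivable (Efr eps j f) q e.
Proof.
move=> dj dt; have [al [be [dal dbe E]]] := Efr_first_order j.
rewrite (_ : Efr eps j f = al * pd j f + be * pd (n + n) f); last first.
  by apply/funext => z; rewrite E.
exact: derivableD (derivableM (dal q e) dj) (derivableM (dbe q e) dt).
Qed.

Lemma EfrM (j : 'I_(n + n).+1) f g q :
  coord_derivable f q -> coord_derivable g q ->
  Efr eps j (fun z => f z * g z) q = f q * Efr eps j g q + g q * Efr eps j f q.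
Proof.
move=> df dg; have [al [be [_ _ E]]] := Efr_first_order j.
have dft : derivable f q (edir R n (n + n)) := df ord_max.
have dgt : derivable g q (edir R n (n + n)) := dg ord_max.
rewrite !E /pd -/(f * g) (deriveM (df j) (dg j)) (deriveM dft dgt).
have leibniz (a b x y dx dy dx' dy' : R) :
    a * (x * dy + y * dx) + b * (x * dy' + y * dx') =
    x * (a * dy + b * dy') + y * (a * dx + b * dx') by ring.
exact: leibniz.
Qed.

Lemma Efr_sum (j : 'I_(n + n).+1) m (h : 'I_m -> V -> R) q :
  (forall i, coord_derivable (h i) q) ->
  Efr eps j (\sum_(i < m) h i) q = \sum_(i < m) Efr eps j (h i) q.
Proof.
move=> dh; have [al [be [_ _ E]]] := Efr_first_order j.
have dhj i : derivable (h i) q (edir R n j) := dh i j.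
have dht i : derivable (h i) q (edir R n (n + n)) := dh i ord_max.
rewrite E /pd (derive_sum dhj) (derive_sum dht).
by rewrite !mulr_sumr -big_split; apply: eq_bigr => i _; rewrite E.
Qed.

Lemma Efr_comp (j : 'I_(n + n).+1) (phi : R -> R) f q :
  coord_derivable f q -> derivable phi (f q) 1 ->
  Efr eps j (phi \o f) q = derive1 phi (f q) * Efr eps j f q.
Proof.
move=> df dphi; have [al [be [_ _ E]]] := Efr_first_order j.
have dft : derivable f q (edir R n (n + n)) := df ord_max.
rewrite !E /pd (derive_comp (df j) dphi) (derive_comp dft dphi).
by rewrite mulrDr !mulrA [al q * _]mulrC [be q * _]mulrC.
Qed.

Lemma coord_derivableM f g q :
  coord_derivable f q -> coord_derivable g q -> coord_derivable (fun z => f z * g z) q.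
Proof. by move=> df dg k; exact: derivableM (df k) (dg k). Qed.

Lemma coord_derivable_sum m (h : 'I_m -> V -> R) q :
  (forall i, coord_derivable (h i) q) -> coord_derivable (\sum_(i < m) h i) q.
Proof. by move=> dh k; apply: derivable_sum => i; exact: dh. Qed.

Lemma coord_derivable_comp (phi : R -> R) f q :
  coord_derivable f q -> derivable phi (f q) 1 -> coord_derivable (phi \o f) q.
Proof. by move=> df dphi k; exact: derivable_comp (df k) dphi. Qed.

Lemma gnorm_powR (v : V -> R) (r : R) q :
  Defs.gnorm eps v q `^ r = gnorm2 eps v q `^ (r / 2).
Proof.
rewrite /Defs.gnorm -powR12_sqrt ?[r / 2]mulrC ?powRrM //.
by apply: sumr_ge0 => i _; exact: sqr_ge0.
Qed.

Lemma gnorm2_gt0 (v : V -> R) q : grad_eps eps v q != 0 -> 0 < gnorm2 eps v q.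
Proof.
apply: contraNT; rewrite -leNgt => A_le0; apply/eqP/rowP => j; rewrite !mxE.
have A_eq0 : gnorm2 eps v q = 0.
  by apply/le_anti; rewrite A_le0 sumr_ge0 // => i _; exact: sqr_ge0.
move/eqP: A_eq0; rewrite psumr_eq0 => [/allP/(_ j (mem_index_enum j))|i _].
  by rewrite implyTb sqrf_eq0 => /eqP.
exact: sqr_ge0.
Qed.

Section AtPoint.
Variables (v : V -> R) (q : V).
Hypothesis d2v : forall i : 'I_(n + n).+1, coord_derivable (pd i v) q.

Lemma coord_derivable_Efr (i : 'I_(n + n).+1) : coord_derivable (Efr eps i v) q.
Proof.
by move=> k; apply: derivable_Efr; [exact: d2v i k|exact: d2v ord_max k].
Qed.

Lemma gnorm2E :
  gnorm2 eps v = \sum_(i < (n + n).+1) (fun z => Efr eps i v z * Efr eps i v z).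
Proof.
by apply/funext => z; rewrite fct_sumE; apply: eq_bigr => i _; rewrite expr2.
Qed.

Lemma coord_derivable_gnorm2 : coord_derivable (gnorm2 eps v) q.
Proof.
by rewrite gnorm2E; apply: coord_derivable_sum => i;
  apply: coord_derivableM; exact: coord_derivable_Efr.
Qed.

Lemma Efr_gnorm2 (j : 'I_(n + n).+1) :
  Efr eps j (gnorm2 eps v) q =
  2 * \sum_(i < (n + n).+1) Efr eps i v q * Efr eps j (Efr eps i v) q.
Proof.
rewrite gnorm2E Efr_sum => [|i]; last first.
  by apply: coord_derivableM; exact: coord_derivable_Efr.
rewrite mulr_sumr; apply: eq_bigr => i _.
by rewrite EfrM; [ring | exact: coord_derivable_Efr..].
Qed.

Lemma div_pfluxE (p : R) : 0 < gnorm2 eps v q ->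
  \sum_(j < (n + n).+1)
      Efr eps j (fun z => Defs.gnorm eps v z `^ (p - 2) * Efr eps j v z) q =
  gnorm2 eps v q `^ ((p - 4) / 2) *
    (gnorm2 eps v q * \sum_(i < (n + n).+1) Efr eps i (Efr eps i v) q +
     (p - 2) * \sum_(i < (n + n).+1) \sum_(j < (n + n).+1)
        Efr eps j (Efr eps i v) q * (Efr eps i v q * Efr eps j v q)).
Proof.
set A := gnorm2 eps v q => A_gt0; set c := (p - 2) / 2.
have powR_der := @is_derive1_powR R c A A_gt0.
have dpow : derivable (@powR R ^~ c) A 1 by exact: ex_derive.
have dpowE : derive1 (@powR R ^~ c) A = c * A `^ (c - 1).
  by rewrite derive1E derive_val.
have flux (j : 'I_(n + n).+1) :
    (fun z => Defs.gnorm eps v z `^ (p - 2) * Efr eps j v z) =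
    (fun z => ((@powR R ^~ c) \o gnorm2 eps v) z * Efr eps j v z).
  by apply/funext => z; rewrite /= gnorm_powR.
have Efr_flux (j : 'I_(n + n).+1) :
    Efr eps j (fun z => Defs.gnorm eps v z `^ (p - 2) * Efr eps j v z) q =
    A `^ c * Efr eps j (Efr eps j v) q + Efr eps j v q * (c * A `^ (c - 1) *
      (2 * \sum_(i < (n + n).+1) Efr eps i v q * Efr eps j (Efr eps i v) q)).
  rewrite flux EfrM; last exact: coord_derivable_Efr.
    by rewrite Efr_comp // ?dpowE ?Efr_gnorm2 //; exact: coord_derivable_gnorm2.
  exact/coord_derivable_comp/dpow/coord_derivable_gnorm2.
have c_pred : c - 1 = (p - 4) / 2 by rewrite /c; field.
have powR_c : A `^ c = A `^ (c - 1) * A.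
  rewrite -{1}(subrK 1 c) powRD ?powRr1 ?ltW //.
  by rewrite (gt_eqF A_gt0) implybT.
rewrite (eq_bigr _ (fun j _ => Efr_flux j)) big_split /= -mulr_sumr.
rewrite (_ : \sum_(j < (n + n).+1) Efr eps j v q * _ = 2 * (c * A `^ (c - 1)) *
    \sum_(i < (n + n).+1) \sum_(j < (n + n).+1)
        Efr eps j (Efr eps i v) q * (Efr eps i v q * Efr eps j v q)); last first.
  rewrite exchange_big /= mulr_sumr; apply: eq_bigr => j _.
  by rewrite !mulr_sumr; apply: eq_bigr => i _; ring.
by rewrite powR_c c_pred /c; field.
Qed.

Lemma dirder_gnorm2E : dirder_gnorm2 eps v q =
  2 * (\sum_(i < (n + n).+1) \sum_(j < (n + n).+1)
          Efr eps j (Efr eps i v) q * (Efr eps i v q * Efr eps j v q))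
    / Defs.gnorm eps v q.
Proof.
rewrite /dirder_gnorm2 exchange_big /= mulrAC mulr_sumr; apply: eq_bigr => j _.
by rewrite Efr_gnorm2 !mulr_sumr; apply: eq_bigr => i _; ring.
Qed.

End AtPoint.

End Frame.

Theorem lemma6p5 (R : realType) (n : nat) (p eps : R)
  (Om : set (Hpt R n)) (v : Hpt R n -> R) :
  (0 < n)%N -> 1 < p -> p <= 2 -> 0 < eps -> eps <= 1 ->
  open Om -> C2on Om v ->
  (forall q, Om q -> grad_eps eps v q != 0) ->
  p_harmonic eps p Om v ->
  forall q, Om q ->
    2 * gnorm2 eps v q * hess2 eps v q >=
    1 / 2 * (1 + (p - 1) ^+ 2 / (2 * n%:R)) * (dirder_gnorm2 eps v q) ^+ 2.
Proof.
move=> n_gt0 _ _ _ _ _ [_ C2] grad_neq0 pharm q Oq.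
have d2v (i : 'I_(n + n).+1) : coord_derivable (pd i v) q.
  by move=> k; exact: ((C2 i (ltn_ord i)).2.2 k (ltn_ord k)).1 q Oq.
have A_gt0 := gnorm2_gt0 (grad_neq0 q Oq).
have := trace_quadform_sqr_le (a := fun i : 'I_(n + n).+1 => Efr eps i v q)
  (fun i j => Efr eps j (Efr eps i v) q) A_gt0.
have := pharm q Oq; rewrite (div_pfluxE d2v p A_gt0) => /eqP.
rewrite mulf_eq0 powR_eq0 (gt_eqF A_gt0) /= => /eqP.
rewrite dirder_gnorm2E // card_ord /Defs.gnorm.
rewrite -/(gnorm2 eps v q) -/(hess2 eps v q).
set A := gnorm2 eps v q; set F := hess2 eps v q.
set tr := \sum_i _; set T := \sum_i \sum_j _ => plaplace.
have -> : (n + n).+1%:R - 1 = 2 * n%:R :> R by rewrite -addn1 !natrD; ring.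
have -> : A * tr - T = - (p - 1) * T.
  by apply/eqP; rewrite -subr_eq0 -plaplace; apply/eqP; ring.
move=> bound; have n_pos : 0 < n%:R :> R by rewrite ltr0n.
rewrite expr_div_n (sqr_sqrtr (ltW A_gt0)).
rewrite (_ : 1 / 2 * _ * _ = (2 * n%:R + (p - 1) ^+ 2) * T ^+ 2 / (n%:R * A));
  last first.
  by rewrite -/A; field; rewrite !lt0r_neq0.
by rewrite ler_pdivrMr ?mulr_gt0 //; nra.
Qed.
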